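(* Let $\omega=\omega_0\omega_1\cdots$ be an infinite sequence over $\{b,c,d\}$ which is not eventually constant. Then for each $n\ge0$ there is a nontrivial element $t\in\mathrm{Rist}_{G_\omega}(1^n)$ with word length at most $2^{n+2}$ with respect to the generators $a,b,c,d$.
   Context: Let $\mathbf{T}=\{0,1\}^*$ be the rooted binary tree of finite binary strings, and $a$ the automorphism flipping the first bit of a string ($a$ fixes the empty string). For each $x\in\{b,c,d\}$ and $n\ge0$, the automorphism $x_n$ is defined by $x_n(1^j)=1^j$ for all $j\ge0$, and $x_n(1^j0s)=1^j0s$ if $\omega_{n+j}=x$, $x_n(1^j0s)=1^j0a(s)$ if $\omega_{n+j}\ne x$, for all $j\ge0$ and strings $s$. Write $b=b_0,c=c_0,d=d_0$; the generalized Grigorchuk group is $G_\omega=\langle a,b,c,d\rangle$. For a string $s$, $\mathrm{Rist}(s)$ is the group of automorphisms of $\mathbf{T}$ fixing every string not beginning with $s$, and $\mathrm{Rist}_{G_\omega}(s)=G_\omega\cap\mathrm{Rist}(s)$. *)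

From mathcomp Require Import all_boot.
Set Implicit Arguments. Unset Strict Implicit. Unset Printing Implicit Defensive.

(* Vertices of the binary tree {0,1}^*: finite bit strings, false = 0, true = 1. *)
Definition vertex := seq bool.

Inductive bcd := LB | LC | LD.
Definition bcd_eqb (x y : bcd) : bool :=
  match x, y with LB, LB | LC, LC | LD, LD => true | _, _ => false end.

Inductive gen := Ga | Gb | Gc | Gd.

Definition act_a (s : vertex) : vertex :=
  match s with [::] => [::] | x :: t => negb x :: t end.

Fixpoint act_x (om : nat -> bcd) (x : bcd) (n : nat) (s : vertex) : vertex :=
  match s with
  | [::] => [::]
  | true :: t => true :: act_x om x n.+1 t
  | false :: t => false :: (if bcd_eqb (om n) x then t else act_a t)
  end.

(* Action of a generator of G_omega (b = b_0, c = c_0, d = d_0). *)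
Definition act_gen (om : nat -> bcd) (g : gen) : vertex -> vertex :=
  match g with
  | Ga => act_a
  | Gb => act_x om LB 0
  | Gc => act_x om LC 0
  | Gd => act_x om LD 0
  end.

(* The element of G_omega represented by a word g_1 g_2 ... g_k
   (the composite g_1 o g_2 o ... o g_k). *)
Definition eval_word (om : nat -> bcd) (w : seq gen) : vertex -> vertex :=
  foldr (fun g f => act_gen om g \o f) id w.

Definition in_Rist (s : vertex) (f : vertex -> vertex) : Prop :=
  forall v : vertex, ~~ prefix s v -> f v = v.

Definition nontrivial (f : vertex -> vertex) : Prop := exists v : vertex, f v <> v.

Definition eventually_constant (om : nat -> bcd) : Prop :=
  exists N x, forall m, N <= m -> om m = x.

From mathcomp Require Import all_boot zify.
From Stdlib Require Import Classical.

Set Implicit Arguments.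
Unset Strict Implicit.
Unset Printing Implicit Defensive.

(* The witness is t_n = phi_0 (phi_1 (... phi_(n-1) ((a x)^2))) with x = omega_(n-1),
   where phi_k replaces each a by a y_k a for a letter y_k <> omega_k.  Writing an
   element as the pair of its sections at 0 and 1, a y_k a = (y_(k+1), a) and
   x_k = (omega_k(x), x_(k+1)), where omega_k(x) is 1 if omega_k = x and a otherwise.
   So the section of phi_k(w) at 1 is w read one level down, and t_n acts on 1^n as
   (a x_n)^2, which moves some vertex because omega is not eventually constant.  The
   section at 0 is the image of w under a |-> y_(k+1), x |-> omega_k(x); through the
   whole tower a is sent to 1 or a unless omega is constant on the levels involved,
   and in both cases (a x)^2 is sent to 1, so t_n lies in Rist(1^n).  Each phi_k
   doubles the length, so |t_n| = 2^(n+2). *)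

Section WordAction.

Variables (T : Type) (ea : T -> T) (ex : bcd -> T -> T).

Definition gen_act (g : gen) : T -> T :=
  match g with Ga => ea | Gb => ex LB | Gc => ex LC | Gd => ex LD end.

Definition word_act (w : seq gen) : T -> T := foldr (fun g f => gen_act g \o f) id w.

Lemma word_act_cat w1 w2 : word_act (w1 ++ w2) = word_act w1 \o word_act w2.
Proof. by elim: w1 => //= g w1 ->. Qed.

End WordAction.

Lemma word_act_morph (T U : Type) (p : T -> U) ea ex ea' ex' :
    {morph p : t / ea t >-> ea' t} -> (forall x, {morph p : t / ex x t >-> ex' x t}) ->
  forall w, {morph p : t / word_act ea ex w t >-> word_act ea' ex' w t}.
Proof. by move=> Ha Hx; elim=> [|[] w IH] t //=; rewrite -IH ?Ha ?Hx. Qed.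

Definition gen_of (x : bcd) : gen := match x with LB => Gb | LC => Gc | LD => Gd end.

Lemma gen_act_gen_of T ea (ex : bcd -> T -> T) x : gen_act ea ex (gen_of x) = ex x.
Proof. by case: x. Qed.

Definition is_a (g : gen) : bool := if g is Ga then true else false.

Definition commutator_word (x : bcd) : seq gen := [:: Ga; gen_of x; Ga; gen_of x].

Lemma word_act_commutator T ea (ex : bcd -> T -> T) x :
  word_act ea ex (commutator_word x) = ea \o ex x \o ea \o ex x.
Proof. by rewrite /= gen_act_gen_of. Qed.

Lemma size_commutator_word x :
  size (commutator_word x) = (count is_a (commutator_word x)).*2.
Proof. by case: x. Qed.

Definition lift (y : bcd) (w : seq gen) : seq gen :=
  flatten [seq if g is Ga then [:: Ga; gen_of y; Ga] else [:: g] | g <- w].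

Definition lifts (ys : seq bcd) (w : seq gen) : seq gen := foldr lift w ys.

Lemma word_act_lift T ea (ex : bcd -> T -> T) y w :
  word_act ea ex (lift y w) = word_act (ea \o ex y \o ea) ex w.
Proof.
elim: w => //= g w IH; rewrite word_act_cat IH.
by case: g => //=; rewrite gen_act_gen_of.
Qed.

Lemma word_act_lifts T ea (ex : bcd -> T -> T) ys w :
  word_act ea ex (lifts ys w) = word_act (foldl (fun e y => e \o ex y \o e) ea ys) ex w.
Proof. by elim: ys ea => //= y ys IH ea; rewrite word_act_lift IH. Qed.

Lemma size_count_lift y w :
  size (lift y w) = size w + (count is_a w).*2 /\ count is_a (lift y w) = (count is_a w).*2.
Proof.
elim: w => //= g w [Hs Hc]; rewrite size_cat count_cat Hs Hc.
have a_gen_of : is_a (gen_of y) = false by case: (y).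
by case: g => /=; rewrite ?a_gen_of; lia.
Qed.

Lemma size_lifts ys w :
  size w = (count is_a w).*2 -> size (lifts ys w) = 2 ^ size ys * size w.
Proof.
suff: size w = (count is_a w).*2 ->
  size (lifts ys w) = (count is_a (lifts ys w)).*2 /\ size (lifts ys w) = 2 ^ size ys * size w.
  by move=> H /H [].
elim: ys => [|y ys IH] /= Hw; first by rewrite mul1n.
have [Hb Hs] := IH Hw; have [Hs' Hc'] := size_count_lift y (lifts ys w).
by rewrite Hs' Hc' expnS; lia.
Qed.

Section PowersOfInvolution.

Variables (T : Type) (a : T -> T).
Hypothesis aK : involutive a.

Definition power_of (f : T -> T) : Prop := f =1 id \/ f =1 a.

Lemma power_of_conj e f : power_of e -> power_of f -> forall t, e (f (e t)) = f t.
Proof. by case=> He [] Hf t; rewrite !(He, Hf) ?aK. Qed.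

End PowersOfInvolution.

Lemma conj_involutive T (e f : T -> T) :
  involutive e -> involutive f -> involutive (e \o f \o e).
Proof. by move=> eK fK t /=; rewrite eK fK eK. Qed.

Lemma act_aK : involutive act_a.
Proof. by case=> [|b t] //=; rewrite negbK. Qed.

Lemma bcd_eqbP x y : reflect (x = y) (bcd_eqb x y).
Proof. by case: x; case: y; constructor. Qed.

Lemma bcd_eqbb x : bcd_eqb x x.
Proof. by case: x. Qed.

Definition bcd_next (x : bcd) : bcd := match x with LB => LC | LC => LD | LD => LB end.

Lemma bcd_next_neq x : bcd_eqb x (bcd_next x) = false.
Proof. by case: x. Qed.

Section TreeAction.

Variable om : nat -> bcd.

(* omega_k(x): the action of x_k on the subtree rooted at 0 *)
Definition section0 (x : bcd) (k : nat) : vertex -> vertex :=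
  if bcd_eqb (om k) x then id else act_a.

Lemma section0K x k : involutive (section0 x k).
Proof. by rewrite /section0; case: bcd_eqb => //; apply: act_aK. Qed.

Lemma power_of_section0 x k : power_of act_a (section0 x k).
Proof. by rewrite /section0; case: bcd_eqb; [left | right]. Qed.

Lemma act_x_false x k s : act_x om x k (false :: s) = false :: section0 x k s.
Proof. by rewrite /section0 /=; case: bcd_eqb. Qed.

Lemma act_xK x k : involutive (act_x om x k).
Proof. by move=> s; elim: s k => [|[] t IH] k //; rewrite ?act_x_false ?section0K //= IH. Qed.

Lemma act_x_nseq x k i s :
  act_x om x k (nseq i true ++ false :: s) = nseq i true ++ false :: section0 x (k + i) s.
Proof.
elim: i k => [|i IH] k; first by rewrite addn0 act_x_false.
by rewrite /= IH addSnnS.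
Qed.

Definition level_act (k : nat) : seq gen -> vertex -> vertex :=
  word_act act_a (fun x => act_x om x k).

Lemma level_act_nil k w : level_act k w [::] = [::].
Proof. by elim: w => //= g w IH; rewrite IH; case: g. Qed.

Lemma level_act_lift_true k y w s : bcd_eqb (om k) y = false ->
  level_act k (lift y w) (true :: s) = true :: level_act k.+1 w s.
Proof.
move=> Hy; rewrite /level_act word_act_lift; symmetry.
by apply: (word_act_morph (p := cons true)) => [t|x t] //=; rewrite Hy.
Qed.

Lemma level_act_lift_false k y w s :
  level_act k (lift y w) (false :: s) =
  false :: word_act (act_x om y k.+1) (fun x => section0 x k) w s.
Proof.
rewrite /level_act word_act_lift; symmetry.
by apply: (word_act_morph (p := cons false)) => [t|x t] //; rewrite act_x_false.
Qed.

(* y_j differs from omega_j, and y_j = omega_(j-1) whenever omega_(j-1) <> omega_j *)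
Definition lift_letter (j : nat) : bcd :=
  match j with
  | 0 => bcd_next (om 0)
  | i.+1 => if bcd_eqb (om i) (om j) then bcd_next (om j) else om i
  end.

Lemma lift_letter_neq j : bcd_eqb (om j) (lift_letter j) = false.
Proof.
case: j => [|j] /=; first exact: bcd_next_neq.
case: (bcd_eqbP (om j) (om j.+1)) => [_|Hne]; first exact: bcd_next_neq.
by apply/bcd_eqbP => Heq; apply: Hne.
Qed.

Definition rist_word (k m : nat) : seq gen :=
  lifts [seq lift_letter i | i <- iota k m] (commutator_word (om (k + m).-1)).

Lemma rist_wordS k m : rist_word k m.+1 = lift (lift_letter k) (rist_word k.+1 m).
Proof. by rewrite /rist_word -addSnnS. Qed.

Lemma level_act_lifts_nseq k m w s :
  level_act k (lifts [seq lift_letter i | i <- iota k m] w) (nseq m true ++ s) =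
  nseq m true ++ level_act (k + m) w s.
Proof.
elim: m k => [|m IH] k; first by rewrite addn0.
by rewrite /= level_act_lift_true ?lift_letter_neq // IH addSnnS.
Qed.

(* the section at 0 of the image of a under lift (lift_letter k) after the further
   lifts by lift_letter (k+1), ..., lift_letter (k+m) *)
Definition a_section (k m : nat) : vertex -> vertex :=
  foldl (fun e y => e \o section0 y k \o e) (act_x om (lift_letter k) k.+1)
        [seq lift_letter i | i <- iota k.+1 m].

Lemma a_sectionS k m :
  a_section k m.+1 = a_section k m \o section0 (lift_letter (k + m).+1) k \o a_section k m.
Proof. by rewrite /a_section -[m.+1]addn1 iotaD map_cat foldl_cat. Qed.

Lemma a_sectionK k m : involutive (a_section k m).
Proof.
elim: m => [|m IH]; first exact: act_xK.
by rewrite a_sectionS; apply: conj_involutive => //; apply: section0K.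
Qed.

Lemma a_section_spec k m :
  (forall j, j <= m -> om (k + j) = om k) \/ power_of act_a (a_section k m).
Proof.
elim: m => [|m [Hconst | Hpow]].
- by left=> j; rewrite leqn0 => /eqP ->; rewrite addn0.
- case: (bcd_eqbP (om (k + m.+1)) (om k)) => [Heq | Hne].
    by left=> j; rewrite leq_eqVlt => /orP [/eqP -> // | /Hconst].
  (* omega changes at k+m+1, so y_(k+m+1) = omega_k acts trivially below 0 *)
  have Hy : lift_letter (k + m).+1 = om k.
    rewrite /= -addnS Hconst //; case: (bcd_eqbP (om k) (om (k + m.+1))) => // Hk.
    by case: Hne.
  right; left => t; rewrite a_sectionS Hy /section0 bcd_eqbb /=.
  exact: a_sectionK.
- have Hy := power_of_section0 (lift_letter (k + m).+1) k.
  have Hs : a_section k m.+1 =1 section0 (lift_letter (k + m).+1) k.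
    by move=> t; rewrite a_sectionS /= (power_of_conj act_aK Hpow Hy).
  by right; case: Hy => Hy; [left | right] => t; rewrite Hs Hy.
Qed.

Lemma rist_word_section0 k m :
  word_act (act_x om (lift_letter k) k.+1) (fun x => section0 x k) (rist_word k.+1 m) =1 id.
Proof.
move=> t; rewrite word_act_lifts word_act_commutator /= -/(a_section k m).
case: (a_section_spec k m) => [Hconst | Hpow].
- by rewrite Hconst // /section0 bcd_eqbb /= a_sectionK.
- by rewrite (power_of_conj act_aK Hpow (power_of_section0 _ _)) section0K.
Qed.

Lemma rist_word_in_Rist k m v :
  ~~ prefix (nseq m true) v -> level_act k (rist_word k m) v = v.
Proof.
elim: m k v => [|m IH] k [|[] t] //= Hv; rewrite ?level_act_nil // rist_wordS.
- by rewrite level_act_lift_true ?lift_letter_neq // IH.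
- by rewrite level_act_lift_false rist_word_section0.
Qed.

End TreeAction.

Lemma eval_word_level0 om w : eval_word om w = level_act om 0 w.
Proof. by []. Qed.

Lemma not_eventually_constant_at om : ~ eventually_constant om ->
  forall N x, exists2 m, N <= m & om m <> x.
Proof.
move=> Hom N x; apply: NNPP => Hno; apply: Hom; exists N, x => m Hm.
by apply: NNPP => Hne; apply: Hno; exists m.
Qed.

Lemma commutator_nontrivial om k x : ~ eventually_constant om ->
  exists s, level_act om k (commutator_word x) s <> s.
Proof.
move=> Hom; rewrite /level_act word_act_commutator.
case Hk: (bcd_eqb (om k) x); last by exists [:: false; false]; rewrite /= Hk.
have [m Hm /bcd_eqbP/negbTE Hne] := not_eventually_constant_at Hom k.+1 x.
exists (false :: nseq (m - k.+1) true ++ [:: false; false]) => /=.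
rewrite Hk act_x_nseq subnKC // /section0 Hne /=.
by move=> [] /eqP; rewrite eqseq_cat ?eqxx.
Qed.

Theorem lemma6p3 (om : nat -> bcd) (Hom : ~ eventually_constant om) (n : nat) :
  exists w : seq gen,
    size w <= 2 ^ (n + 2) /\
    nontrivial (eval_word om w) /\
    in_Rist (nseq n true) (eval_word om w).
Proof.
exists (rist_word om 0 n); split; [|split].
- rewrite /rist_word (size_lifts _ (size_commutator_word _)) size_map size_iota expnD.
  exact: leqnn.
- have [s Hs] := commutator_nontrivial n (om n.-1) Hom.
  exists (nseq n true ++ s); rewrite eval_word_level0 /rist_word level_act_lifts_nseq.
  by move/(congr1 (drop n)); rewrite !drop_size_cat ?size_nseq.
- by move=> v; rewrite eval_word_level0; apply: rist_word_in_Rist.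
Qed.
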